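(* For all $n,k\in\mathbb N$ and all $t\in(0,1)$, the matrix $A_{n,k,t}$ is a GKK matrix, i.e. a weakly sign-symmetric $P$-matrix.
   Context: For $x\in\mathbb R$, $x_+=\max\{x,0\}$. For $k\in\mathbb{N}$ and $t\in(0,1)$, $A_{\infty,k,t}=(A(i,j))_{i,j\ge1}$ is the infinite Toeplitz Hessenberg matrix with $A(i,j)=a_{j-i}$ for $j\ge i$, $A(i+1,i)=1$, and $A(i,j)=0$ for $i\ge j+2$, where $(a_0,a_1,\ldots)$ is the unique sequence for which the leading principal minors satisfy $\det A(\{1,\dots,n\})=t^{(n-k-1)_+}$ for all $n\in\mathbb N$. $A_{n,k,t}$ is the leading principal $n\times n$ submatrix of $A_{\infty,k,t}$. For $A\in\mathbb C^{n\times n}$ and $\alpha,\beta\subseteq\{1,\dots,n\}$ with $\#\alpha=\#\beta$, $A[\alpha,\beta]$ is the determinant of the submatrix with rows $\alpha$ and columns $\beta$, $A[\alpha]=A[\alpha,\alpha]$, $A[\emptyset]=1$. $A$ is a $P$-matrix if $A[\alpha]>0$ for all $\alpha\subseteq\{1,\dots,n\}$. $A$ is weakly sign-symmetric if $A[\alpha,\beta]A[\beta,\alpha]\ge0$ for all $\alpha,\beta$ with $\#\alpha=\#\beta=\#(\alpha\cup\beta)-1$. *)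

From HB Require Import structures.
From mathcomp Require Import all_boot all_order all_algebra.
From mathcomp Require Import reals.
Set Implicit Arguments. Unset Strict Implicit. Unset Printing Implicit Defensive.
Import Order.TTheory GRing.Theory Num.Theory.
Local Open Scope ring_scope.

(* x_+ = max {x, 0} on nat (the exponent (n-k-1)_+); nat subtraction is
   already truncated, so (n - k - 1)%N = (n-k-1)_+ . *)
Definition posp (m : int) : nat := `|Num.max m 0|%N.

(* The n x n leading principal submatrix of the infinite Toeplitz Hessenberg
   matrix A_infty: entries A(i,j) = a_(j-i) for j >= i, A(i+1,i) = 1,
   A(i,j) = 0 for i >= j+2.  (0-based indices; this does not affect entries.) *)
Definition toepHess {R : nzRingType} (a : nat -> R) (n : nat) : 'M[R]_n :=
  \matrix_(i < n, j < n)
    if (i <= j)%N then a (j - i)%N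
    else if i == j.+1 :> nat then 1 else 0.

Definition leading_minors_prop {R : realType} (k : nat) (t : R) (a : nat -> R) :=
  forall n : nat, (0 < n)%N ->
    \det (toepHess a n) = t ^+ posp (n%:Z - k%:Z - 1).

(* A[alpha, beta]: determinant of the submatrix with rows alpha and columns
   beta (both listed in increasing order), for #alpha = #beta. *)
Definition minor {R : comNzRingType} n (A : 'M[R]_n) (alpha beta : {set 'I_n})
  (h : #|alpha| = #|beta|) : R :=
  \det (\matrix_(i < #|alpha|, j < #|alpha|)
          A (enum_val i) (enum_val (cast_ord h j))).

(* P-matrix: all principal minors positive (A[emptyset] = 1 automatically). *)
Definition P_matrix {R : numDomainType} n (A : 'M[R]_n) : Prop :=
  forall alpha : {set 'I_n}, 0 < minor A (erefl #|alpha|).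

Definition weakly_sign_symmetric {R : numDomainType} n (A : 'M[R]_n) : Prop :=
  forall (alpha beta : {set 'I_n}) (h : #|alpha| = #|beta|),
    #|alpha :|: beta| = #|alpha|.+1 ->
    0 <= minor A h * minor A (esym h).

Definition GKK {R : numDomainType} n (A : 'M[R]_n) : Prop :=
  weakly_sign_symmetric A /\ P_matrix A.

(* Entries of A_oo more than one step below the diagonal vanish, so a
   submatrix with increasing row and column indices splits into diagonal
   blocks wherever the indices jump by at least two.  Hence a principal minor
   is a product of leading principal minors e_m = det A_m > 0.  For an almost
   principal pair A[U\y, U\x], A[U\x, U\y], split U into its initial run of
   consecutive integers and the rest: if x and y fall on different sides one
   of the two minors vanishes, otherwise the pair factors into squares times
   either a smaller such pair or a pair of symmetric cofactors of a leading
   block A_m.  The adjugate of A_m is explicit, with (j, i) entry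
   (-1)^(i+j) (e_i e_(m-1-j) - [j < i] e_m e_(i-j-1)), by the recurrence
   e_(n+1) = sum_j (-1)^j a_j e_(n-j); so symmetric cofactors have a
   nonnegative product once e_m e_(y-x-1) <= e_y e_(m-1-x), which holds for
   e_m = t^((m-k-1)_+) because t <= 1.  Solving the same recurrence for a_n
   produces the sequence a. *)

From mathcomp Require Import all_boot all_order all_algebra.
From mathcomp Require Import reals.
From mathcomp Require Import zify ring.
Import Order.TTheory GRing.Theory Num.Theory.
Local Open Scope ring_scope.
Set Implicit Arguments. Unset Strict Implicit. Unset Printing Implicit Defensive.

Lemma nth_iota_bump n j q : (j <= n)%N -> (q < n)%N ->
  nth 0%N (iota 0 j ++ iota j.+1 (n - j)) q = bump j q.
Proof.
move=> le_jn lt_qn; rewrite nth_cat size_iota /bump.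
case: ltnP => [lt_qj|le_jq]; first by rewrite nth_iota // leqNgt lt_qj.
by rewrite nth_iota; lia.
Qed.

Section ToeplitzHessenbergSubmatrices.
Variables (R : comNzRingType) (a : nat -> R).
Local Notation e n := (\det (toepHess a n)).

Definition toepHess_entry (i j : nat) : R :=
  if (i <= j)%N then a (j - i) else if i == j.+1 then 1 else 0.

Definition toepHess_sub m (r c : seq nat) : 'M[R]_m :=
  \matrix_(p < m, q < m) toepHess_entry (nth 0%N r p) (nth 0%N c q).

Lemma toepHess_entry_lower i j : (j.+1 < i)%N -> toepHess_entry i j = 0.
Proof.
move=> lt_ji; rewrite /toepHess_entry gtn_eqF //.
by have -> : (i <= j)%N = false by lia.
Qed.

Lemma toepHess_entryDl u i j :
  toepHess_entry (u + i) (u + j) = toepHess_entry i j.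
Proof. by rewrite /toepHess_entry leq_add2l subnDl -addnS eqn_add2l. Qed.

Lemma toepHess_iota n : toepHess a n = toepHess_sub n (iota 0 n) (iota 0 n).
Proof. by apply/matrixP => i j; rewrite !mxE !nth_iota. Qed.

Lemma toepHess_sub_shift m u r c : size r = m -> size c = m ->
  toepHess_sub m (map (addn u) r) (map (addn u) c) = toepHess_sub m r c.
Proof.
move=> sz_r sz_c; apply/matrixP => p q; rewrite !mxE.
by rewrite !(nth_map 0%N) ?sz_r ?sz_c // toepHess_entryDl.
Qed.

Lemma det_toepHess_sub_iota u m :
  \det (toepHess_sub m (iota u m) (iota u m)) = e m.
Proof.
by rewrite -(addn0 u) iotaDl toepHess_sub_shift ?size_iota // toepHess_iota.
Qed.

(* The lower left block lies below the subdiagonal, hence vanishes. *)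
Lemma det_toepHess_sub_cat m1 m2 r1 r2 c1 c2 :
  size r1 = m1 -> size c1 = m1 -> size r2 = m2 ->
  (forall i j, i \in r2 -> j \in c1 -> (j.+1 < i)%N) ->
  \det (toepHess_sub (m1 + m2) (r1 ++ r2) (c1 ++ c2)) =
  \det (toepHess_sub m1 r1 c1) * \det (toepHess_sub m2 r2 c2).
Proof.
move=> sz_r1 sz_c1 sz_r2 below; rewrite -[toepHess_sub _ _ _]submxK.
have -> : dlsubmx (toepHess_sub (m1 + m2) (r1 ++ r2) (c1 ++ c2)) = 0.
  apply/matrixP => p q; rewrite !mxE /= nth_cat sz_r1 ltnNge leq_addr /= addKn.
  rewrite nth_cat sz_c1 ltn_ord; apply/toepHess_entry_lower/below.
    by apply: mem_nth; rewrite sz_r2.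
  by apply: mem_nth; rewrite sz_c1.
rewrite det_ublock; f_equal; f_equal; apply/matrixP => p q;
  rewrite !mxE /= !nth_cat sz_r1 sz_c1 ?ltn_ord //.
by rewrite ltnNge leq_addr /= ltnNge leq_addr /= !addKn.
Qed.

Lemma det_toepHess_sub_lower_col m r c0 c : size r = m.+1 ->
  (forall i, i \in r -> (c0.+1 < i)%N) ->
  \det (toepHess_sub m.+1 r (c0 :: c)) = 0.
Proof.
move=> sz_r below; rewrite (expand_det_col _ ord0) big1 // => i _.
by rewrite mxE toepHess_entry_lower ?mul0r // below // mem_nth ?sz_r.
Qed.

Lemma det_toepHess_sub_subdiag m :
  \det (toepHess_sub m (iota 1 m) (iota 0 m)) = 1.
Proof.
rewrite -det_tr det_trig; last first.
  by apply/is_trig_mxP => p q lt_pq; rewrite !mxE !nth_iota // toepHess_entry_lower.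
by rewrite big1 // => i _; rewrite !mxE !nth_iota // /toepHess_entry ltnn eqxx.
Qed.

Lemma det_toepHess_minor0 n j : (j <= n)%N ->
  \det (toepHess_sub n (iota 1 n) (iota 0 j ++ iota j.+1 (n - j))) = e (n - j).
Proof.
move=> le_jn; have [l ->] : exists l, n = (j + l)%N by exists (n - j)%N; lia.
rewrite addKn iotaD det_toepHess_sub_cat ?size_iota //; last first.
  by move=> i i'; rewrite !mem_iota; lia.
rewrite det_toepHess_sub_subdiag mul1r add1n -(addn0 j.+1) iotaDl.
by rewrite toepHess_sub_shift ?size_iota // -toepHess_iota.
Qed.

Lemma det_toepHess_rec n :
  e n.+1 = \sum_(j < n.+1) (-1) ^+ j * a j * e (n - j).
Proof.
rewrite (expand_det_row _ ord0); apply: eq_bigr => j _.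
rewrite /cofactor mxE /= subn0 add0n mulrA [a j * _]mulrC.
congr (_ * _); rewrite -(@det_toepHess_minor0 n j) -1?ltnS //.
f_equal; apply/matrixP => p q.
by rewrite !mxE nth_iota // nth_iota_bump // -ltnS.
Qed.

End ToeplitzHessenbergSubmatrices.

Section ToeplitzHessenbergAdjugate.
Variables (R : comNzRingType) (a : nat -> R).
Local Notation e n := (\det (toepHess a n)).
Local Notation entry := (toepHess_entry a).

Lemma sum_entry1_det_toepHess n :
  \sum_(s < n.+1) (-1) ^+ s * entry 1 s * e (n - s) = (n == 0)%:R.
Proof.
case: n => [|n]; first by rewrite big_ord1 det_mx00 /toepHess_entry !mul1r.
rewrite big_ord_recl /toepHess_entry subn0 expr0 !mul1r /=.
rewrite [X in _ + X](_ : _ = - e n.+1) ?subrr // det_toepHess_rec -sumrN.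
by apply: eq_bigr => j _; rewrite /bump /= subn1 exprS !mulN1r !mulNr.
Qed.

Definition row_dot_dets r m :=
  \sum_(0 <= j < m) entry r j * (-1) ^+ j * e (m - 1 - j).

Lemma row_dot_dets0 m : row_dot_dets 0 m = e m - (m == 0)%:R.
Proof.
case: m => [|n]; first by rewrite /row_dot_dets big_geq // det_mx00 subrr.
rewrite /row_dot_dets big_mkord det_toepHess_rec subr0; apply: eq_bigr => j _.
by rewrite /toepHess_entry /= subn0 subn1 /= [a j * _]mulrC.
Qed.

Lemma row_dot_detsS r m : row_dot_dets r.+1 m = (-1) ^+ r * (m == r.+1)%:R.
Proof.
have [le_mr|lt_rm] := leqP m r.
  rewrite ltn_eqF ?ltnS // mulr0 /row_dot_dets big1_seq // => j.
  rewrite mem_iota => /andP [_ lt_jm].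
  by rewrite toepHess_entry_lower ?mul0r //; lia.
have [n ->] : exists n, m = (r + n.+1)%N by exists (m - r.+1)%N; lia.
rewrite /row_dot_dets (big_cat_nat _ (n := r)) //=; last lia.
rewrite big1_seq ?add0r; last first.
  move=> j; rewrite mem_iota => /andP [_ lt_jr].
  by rewrite toepHess_entry_lower ?mul0r //; lia.
rewrite -{1}(add0n r) big_addn addKn big_mkord.
have -> : (r + n.+1 == r.+1) = (n == 0) by apply/eqP/eqP; lia.
rewrite -sum_entry1_det_toepHess mulr_sumr; apply: eq_bigr => s _.
rewrite (addnC s r) -(addn1 r) toepHess_entryDl.
by rewrite (_ : (r + n.+1 - 1 - (r + s) = n - s)%N) ?exprD; [ring | lia].
Qed.

(* Column i of this matrix is (-1)^i (e_i v_L - e_L v_i), where v_m is the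
   vector ((-1)^j e_(m-1-j))_j; rows r > 0 of A_L kill it by
   [row_dot_detsS] and row 0 sends it to (-1)^i e_i e_L. *)
Definition toepHess_adj L : 'M[R]_L := \matrix_(j, i) ((-1) ^+ (i + j) *
  (e i * e (L - 1 - j) - (if (j < i)%N then e L * e (i - j - 1) else 0))).

Lemma mul_toepHess_adj_entry L r i :
  (toepHess a L *m toepHess_adj L) r i =
  (-1) ^+ i * (e i * row_dot_dets r L - e L * row_dot_dets r i).
Proof.
set F := fun j : nat => entry r j * (-1) ^+ j * e (i - 1 - j).
have widen : \sum_(j < i) F j = \sum_(j < L) if (j < i)%N then F j else 0.
  by rewrite (big_ord_widen L F) 1?ltnW // big_mkcond.
rewrite /row_dot_dets !big_mkord widen [LHS]mxE !mulr_sumr -sumrB mulr_sumr.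
apply: eq_bigr => j _; rewrite /F.
rewrite [toepHess a L r j]mxE -/(entry r j) mxE exprD.
case: ltnP => [lt_ji|le_ij]; last by ring.
by rewrite (_ : (i - j - 1 = i - 1 - j)%N); [ring | lia].
Qed.

Lemma mul_toepHess_adj L : toepHess a L *m toepHess_adj L = (e L)%:M.
Proof.
apply/matrixP => r i; rewrite mul_toepHess_adj_entry !mxE.
have lt_iL := ltn_ord i; have lt_rL := ltn_ord r.
have -> : (r == i) = (nat_of_ord r == nat_of_ord i) by [].
move: (nat_of_ord r) (nat_of_ord i) lt_rL lt_iL => {r i} [|r] i lt_rL lt_iL.
  rewrite !row_dot_dets0 (gtn_eqF (leq_ltn_trans (leq0n i) lt_iL)).
  by case: i {lt_iL} => [|i] /=; rewrite ?det_mx00; ring.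
rewrite !row_dot_detsS (gtn_eqF lt_rL); case: (i =P r.+1) => [->|/eqP ne_ir].
  by rewrite eqxx /= exprS -signr_odd; case: (odd r); rewrite /= ?expr0 ?expr1; ring.
by rewrite eq_sym (negbTE ne_ir) /=; ring.
Qed.

End ToeplitzHessenbergAdjugate.

Section SymmetricCofactors.
Variables (R : idomainType) (a : nat -> R).
Local Notation e n := (\det (toepHess a n)).

Lemma adj_toepHess L : e L != 0 -> \adj (toepHess a L) = toepHess_adj a L.
Proof.
move=> eL_neq0; apply/matrixP => i j; apply: (mulfI eL_neq0).
have := mulmxA (\adj (toepHess a L)) (toepHess a L) (toepHess_adj a L).
rewrite mul_toepHess_adj mul_adj_mx mul_mx_scalar mul_scalar_mx.
by move=> /matrixP/(_ i j); rewrite !mxE.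
Qed.

Lemma det_row'_col'_sym_mul L (x y : 'I_L.+1) : e L.+1 != 0 ->
  \det (row' y (col' x (toepHess a L.+1))) *
  \det (row' x (col' y (toepHess a L.+1))) =
  toepHess_adj a L.+1 x y * toepHess_adj a L.+1 y x.
Proof.
move=> eL_neq0; rewrite -adj_toepHess // !mxE /cofactor addnC.
by rewrite mulrACA -expr2 sqrr_sign mul1r.
Qed.

End SymmetricCofactors.

Lemma sorted_ltn_iota_cat (U : seq nat) : sorted ltn U -> U != [::] ->
  exists u L W, [/\ U = iota u L.+1 ++ W, sorted ltn W &
                    forall w, w \in W -> (u + L.+1 < w)%N].
Proof.
elim: U => // x U IH U_sorted _; case: U IH U_sorted => [|y U] IH /=.
  by exists x, 0%N, [::].
move=> /andP [lt_xy U_sorted].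
have [u [L [W [U_eq W_sorted W_gt]]]] := IH U_sorted isT.
have u_eq : u = y by case: U_eq.
have [y_eq|y_neq] := eqVneq y x.+1.
  exists x, L.+1, W; split => //; first by rewrite U_eq u_eq y_eq.
  by move=> w /W_gt; rewrite u_eq y_eq; lia.
exists x, 0%N, (y :: U); split => // w; rewrite inE => /predU1P [->|wU]; first lia.
by have /allP/(_ w wU) /= := order_path_min ltn_trans U_sorted; lia.
Qed.

Lemma filter_predC1_id (T : eqType) (x : T) s :
  x \notin s -> filter (predC1 x) s = s.
Proof. by move=> xNs; apply/all_filterP/allP => y ys; apply: contraNneq xNs => <-. Qed.

Lemma size_filter_predC1 (T : eqType) (x : T) s : uniq s -> x \in s ->
  size (filter (predC1 x) s) = (size s).-1.
Proof. by move=> s_uniq xs; rewrite -rem_filter // size_rem. Qed.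

Lemma filter_predC1_iota n i : (i <= n)%N ->
  filter (predC1 i) (iota 0 n.+1) = iota 0 i ++ iota i.+1 (n - i).
Proof.
move=> le_in; rewrite (_ : n.+1 = i + (n - i).+1)%N; last lia.
rewrite iotaD filter_cat add0n /= eqxx /= !(@filter_predC1_id _ i) //.
  by rewrite mem_iota; lia.
by rewrite mem_iota; lia.
Qed.

Lemma filter_predC1_iota_shift u n x : (u <= x)%N ->
  filter (predC1 x) (iota u n) = map (addn u) (filter (predC1 (x - u)%N) (iota 0 n)).
Proof.
move=> le_ux; rewrite -(addn0 u) iotaDl filter_map addn0; congr map.
by apply: eq_filter => v /=; apply/negbRL; apply/eqP/eqP; lia.
Qed.

Section RunMinors.
Variables (R : comNzRingType) (a : nat -> R).

Lemma toepHess_sub_del_iota n x y : (x <= n)%N -> (y <= n)%N ->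
  toepHess_sub a n (filter (predC1 y) (iota 0 n.+1)) (filter (predC1 x) (iota 0 n.+1)) =
  row' (inord y) (col' (inord x) (toepHess a n.+1)).
Proof.
move=> le_xn le_yn; apply/matrixP => p q; rewrite !mxE !filter_predC1_iota //.
by rewrite !nth_iota_bump // /= !inordK.
Qed.

(* Column [u + L] meets only rows of [W], which lie two steps below it. *)
Lemma det_toepHess_sub_run_cat_eq0 u L W x y :
  x \in iota u L.+1 -> y \in W -> (forall w, w \in W -> (u + L.+1 < w)%N) ->
  \det (toepHess_sub a (L + size W) (filter (predC1 x) (iota u L.+1) ++ W)
                                     (iota u L.+1 ++ filter (predC1 y) W)) = 0.
Proof.
move=> x_run yW W_gt.
have size_del : size (filter (predC1 x) (iota u L.+1)) = L.
  by rewrite size_filter_predC1 ?iota_uniq // size_iota.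
have -> : iota u L.+1 ++ filter (predC1 y) W =
          iota u L ++ (u + L)%N :: filter (predC1 y) W by rewrite -addn1 iotaD -catA.
rewrite det_toepHess_sub_cat ?size_iota //; last first.
  by move=> i j /W_gt lt_i; rewrite mem_iota; lia.
case: W yW W_gt => // w W _ W_gt.
by rewrite (@det_toepHess_sub_lower_col _ _ (size W)) ?mulr0 // => i /W_gt; lia.
Qed.

Lemma det_toepHess_sub_cat_sym_mul m1 m2 r1 c1 r2 c2 :
  size r1 = m1 -> size c1 = m1 -> size r2 = m2 -> size c2 = m2 ->
  (forall i j, i \in r2 ++ c2 -> j \in r1 ++ c1 -> (j.+1 < i)%N) ->
  \det (toepHess_sub a (m1 + m2) (r1 ++ r2) (c1 ++ c2)) *
  \det (toepHess_sub a (m1 + m2) (c1 ++ c2) (r1 ++ r2)) =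
  \det (toepHess_sub a m1 r1 c1) * \det (toepHess_sub a m1 c1 r1) *
  (\det (toepHess_sub a m2 r2 c2) * \det (toepHess_sub a m2 c2 r2)).
Proof.
move=> sz_r1 sz_c1 sz_r2 sz_c2 below.
have below_rc i j : i \in r2 -> j \in c1 -> (j.+1 < i)%N.
  by move=> ir jc; apply: below; rewrite mem_cat ?ir ?jc ?orbT.
have below_cr i j : i \in c2 -> j \in r1 -> (j.+1 < i)%N.
  by move=> ic jr; apply: below; rewrite mem_cat ?ic ?jr ?orbT.
by rewrite !det_toepHess_sub_cat // mulrACA.
Qed.

End RunMinors.

Definition nat_enum n (A : {set 'I_n}) : seq nat := map val (enum A).

Lemma size_nat_enum n (A : {set 'I_n}) : size (nat_enum A) = #|A|.
Proof. by rewrite size_map cardE. Qed.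

Lemma sorted_nat_enum n (A : {set 'I_n}) : sorted ltn (nat_enum A).
Proof.
apply: (@subseq_sorted _ _ ltn_trans _ (iota 0 n)); last exact: iota_ltn_sorted.
by rewrite -val_enum_ord /nat_enum map_subseq // enumT filter_subseq.
Qed.

Lemma nat_enum_setD1 n (A : {set 'I_n}) y :
  nat_enum (A :\ y) = filter (predC1 (val y)) (nat_enum A).
Proof.
have enumE (B : {set 'I_n}) : enum B = filter (mem B) (enum 'I_n) by rewrite enumT.
rewrite /nat_enum filter_map; congr map.
rewrite [in RHS](enumE A) -[in RHS]filter_predI [in LHS]enumE.
by apply: eq_filter => z /=; rewrite !inE andbC.
Qed.

Lemma nth_nat_enum n (A : {set 'I_n}) (i : 'I_#|A|) :
  nth 0%N (nat_enum A) i = enum_val i.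
Proof. by rewrite /nat_enum (nth_map (enum_val i)) -?cardE // -enum_val_nth. Qed.

Lemma minor_toepHess (R : comNzRingType) (a : nat -> R) n
    (al be : {set 'I_n}) (h : #|al| = #|be|) :
  minor (toepHess a n) h = \det (toepHess_sub a #|al| (nat_enum al) (nat_enum be)).
Proof.
rewrite /minor; f_equal; apply/matrixP => i j.
by rewrite !mxE nth_nat_enum (nth_nat_enum (cast_ord h j)).
Qed.

Lemma setD_set1 (T : finType) (A B : {set T}) z :
  B :\: A = [set z] -> A = (A :|: B) :\ z /\ z \in B.
Proof.
move=> BA; split; last by have /setDP [] : z \in B :\: A by rewrite BA set11.
apply/setP => w; move/setP/(_ w): BA; rewrite !inE.
by case: (w \in A); case: (w \in B); case: (w == z).
Qed.

Lemma cards_setU_succ (T : finType) (al be : {set T}) :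
  #|al| = #|be| -> #|al :|: be| = #|al|.+1 ->
  exists x y, [/\ al = (al :|: be) :\ y, be = (al :|: be) :\ x, x \in al & y \in be].
Proof.
move=> card_eq cardU.
have := cardsUI al be; have := cardsID al be; have := cardsID be al.
rewrite setIC => cardD_be cardD_al cardUI.
have /cards1P [y be_al] : #|be :\: al| == 1 by apply/eqP; lia.
have /cards1P [x al_be] : #|al :\: be| == 1 by apply/eqP; lia.
have [al_eq ybe] := setD_set1 be_al; have [be_eq xal] := setD_set1 al_be.
by exists x, y; rewrite setUC in be_eq.
Qed.

Section GKKCriterion.
Variables (R : realDomainType) (a : nat -> R).
Local Notation e n := (\det (toepHess a n)).
Hypothesis det_toepHess_gt0 : forall n, 0 < e n.
Hypothesis det_toepHess_mul_le : forall L x y, (x < y < L)%N ->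
  e L * e (y - x - 1) <= e y * e (L - 1 - x).

Lemma toepHess_adj_sym_mul_ge0 L (x y : 'I_L) :
  0 <= toepHess_adj a L x y * toepHess_adj a L y x.
Proof.
wlog lt_xy : x y / (x < y)%N.
  move=> W; case: (ltngtP x y) => [/W //|/W Wyx|/val_inj ->].
    by rewrite mulrC.
  by rewrite -expr2 sqr_ge0.
rewrite !mxE mulrACA addnC -expr2 sqrr_sign mul1r lt_xy ltnNge ltnW //= subr0.
have diff_ge0 : 0 <= e y * e (L - 1 - x) - e L * e (y - x - 1).
  by rewrite subr_ge0; apply: det_toepHess_mul_le; rewrite lt_xy ltn_ord.
by apply: mulr_ge0 => //; apply: mulr_ge0; apply: ltW.
Qed.

Lemma det_toepHess_sub_gt0 U : sorted ltn U ->
  0 < \det (toepHess_sub a (size U) U U).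
Proof.
have [N] := ubnP (size U); elim: N U => // N IH U size_U U_sorted.
have [->|U_neq0] := eqVneq U [::]; first by rewrite det_mx00 ltr01.
have [u [L [W [U_eq W_sorted W_gt]]]] := sorted_ltn_iota_cat U_sorted U_neq0.
move: size_U; rewrite U_eq size_cat size_iota => size_U.
rewrite det_toepHess_sub_cat ?size_iota //; last first.
  by move=> i j /W_gt lt_i; rewrite mem_iota; lia.
by rewrite det_toepHess_sub_iota mulr_gt0 // IH //; lia.
Qed.

Lemma det_toepHess_sub_run_del_sym_mul_ge0 u n x y :
  (u <= x <= u + n)%N -> (u <= y <= u + n)%N ->
  0 <= \det (toepHess_sub a n (filter (predC1 y) (iota u n.+1))
                              (filter (predC1 x) (iota u n.+1))) *
       \det (toepHess_sub a n (filter (predC1 x) (iota u n.+1))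
                              (filter (predC1 y) (iota u n.+1))).
Proof.
move=> /andP [le_ux le_xn] /andP [le_uy le_yn].
have size_del z : (z <= n)%N -> size (filter (predC1 z) (iota 0 n.+1)) = n.
  by move=> le_zn; rewrite size_filter_predC1 ?iota_uniq ?mem_iota // size_iota.
rewrite !(filter_predC1_iota_shift _ le_ux) !(filter_predC1_iota_shift _ le_uy).
rewrite !toepHess_sub_shift ?size_del; try lia.
rewrite !toepHess_sub_del_iota; try lia.
by rewrite det_row'_col'_sym_mul ?toepHess_adj_sym_mul_ge0 // lt0r_neq0.
Qed.

Lemma det_toepHess_sub_del_sym_mul_ge0 U x y : sorted ltn U -> x \in U -> y \in U ->
  0 <= \det (toepHess_sub a (size U).-1 (filter (predC1 y) U) (filter (predC1 x) U)) *
       \det (toepHess_sub a (size U).-1 (filter (predC1 x) U) (filter (predC1 y) U)).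
Proof.
have [N] := ubnP (size U); elim: N U => // N IH U size_U U_sorted xU yU.
have U_neq0 : U != [::] by apply: contraTneq xU => ->.
have [u [L [W [U_eq W_sorted W_gt]]]] := sorted_ltn_iota_cat U_sorted U_neq0.
have below i j : i \in W -> j \in iota u L.+1 -> (j.+1 < i)%N.
  by move=> /W_gt lt_i; rewrite mem_iota; lia.
have notin_W z : z \in iota u L.+1 -> z \notin W.
  by rewrite mem_iota => z_run; apply/negP => /W_gt; lia.
have notin_run z : z \in W -> z \notin iota u L.+1.
  by move=> /W_gt lt_z; rewrite mem_iota; lia.
have size_del_run z : z \in iota u L.+1 -> size (filter (predC1 z) (iota u L.+1)) = L.
  by move=> z_run; rewrite size_filter_predC1 ?iota_uniq // size_iota.
have [x_run|xW] : x \in iota u L.+1 \/ x \in W by apply/orP; rewrite -mem_cat -U_eq.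
all: have [y_run|yW] : y \in iota u L.+1 \/ y \in W by apply/orP; rewrite -mem_cat -U_eq.
all: move: size_U; rewrite U_eq !filter_cat size_cat size_iota => size_U.
- rewrite !(filter_predC1_id (notin_W _ _)) // addSn succnK.
  rewrite det_toepHess_sub_cat_sym_mul ?size_del_run //; last first.
    move=> i j; rewrite !mem_cat orbb !mem_filter => iW.
    by case/orP => /andP [_ jV]; exact: below.
  rewrite mulr_ge0 -?expr2 ?sqr_ge0 // det_toepHess_sub_run_del_sym_mul_ge0 //.
    by move: x_run; rewrite mem_iota; lia.
  by move: y_run; rewrite mem_iota; lia.
- rewrite (filter_predC1_id (notin_run _ yW)) (filter_predC1_id (notin_W _ x_run)).
  rewrite addSn succnK.
  by rewrite det_toepHess_sub_run_cat_eq0 ?mulr0.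
- rewrite (filter_predC1_id (notin_run _ xW)) (filter_predC1_id (notin_W _ y_run)).
  rewrite addSn succnK.
  by rewrite det_toepHess_sub_run_cat_eq0 ?mul0r.
have W_uniq : uniq W := sorted_uniq ltn_trans ltnn W_sorted.
have W_gt0 : (0 < size W)%N by case: (W) xW.
rewrite !(filter_predC1_id (notin_run _ _)) //.
rewrite (_ : (L.+1 + size W).-1 = L.+1 + (size W).-1)%N; last lia.
rewrite det_toepHess_sub_cat_sym_mul ?size_iota ?size_filter_predC1 //; last first.
  move=> i j; rewrite !mem_cat orbb !mem_filter.
  by case/orP => /andP [_ iW]; exact: below.
by rewrite mulr_ge0 -?expr2 ?sqr_ge0 // IH //; lia.
Qed.

Lemma GKK_toepHess n : GKK (toepHess a n).
Proof.
split=> [al be card_eq cardU | al]; last first.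
  by rewrite minor_toepHess -size_nat_enum det_toepHess_sub_gt0 // sorted_nat_enum.
have [x [y [al_eq be_eq xal ybe]]] := cards_setU_succ card_eq cardU.
have al_del : nat_enum al = filter (predC1 (val y)) (nat_enum (al :|: be)).
  by rewrite {1}al_eq nat_enum_setD1.
have be_del : nat_enum be = filter (predC1 (val x)) (nat_enum (al :|: be)).
  by rewrite {1}be_eq nat_enum_setD1.
rewrite !minor_toepHess al_del be_del -card_eq.
have -> : #|al| = (size (nat_enum (al :|: be))).-1 by rewrite size_nat_enum cardU.
apply: det_toepHess_sub_del_sym_mul_ge0 => //; first exact: sorted_nat_enum.
  by apply: map_f; rewrite mem_enum inE xal.
by apply: map_f; rewrite mem_enum inE ybe orbT.
Qed.

End GKKCriterion.

Section PrescribedLeadingMinors.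
Variables (R : comNzRingType) (E : nat -> R).
Hypothesis E0 : E 0 = 1.

(* [det_toepHess_rec] at [n.+1] determines [a_n] from [a_0, ..., a_(n-1)];
   [coef_prefix n] lists these first [n] coefficients. *)
Definition next_coef (s : seq R) n :=
  (-1) ^+ n * (E n.+1 - \sum_(j < n) (-1) ^+ j * nth 0 s j * E (n - j)).

Fixpoint coef_prefix n : seq R :=
  if n is n'.+1 then rcons (coef_prefix n') (next_coef (coef_prefix n') n') else [::].

Definition coef n := nth 0 (coef_prefix n.+1) n.

Lemma size_coef_prefix n : size (coef_prefix n) = n.
Proof. by elim: n => //= n IH; rewrite size_rcons IH. Qed.

Lemma nth_coef_prefix n i : (i < n)%N -> nth 0 (coef_prefix n) i = coef i.
Proof.
elim: n => // n IH lt_in; rewrite /= nth_rcons size_coef_prefix.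
case: ltnP => [lt_in'|le_ni]; first by rewrite IH.
have -> : i = n by lia.
by rewrite eqxx /coef /= nth_rcons size_coef_prefix ltnn eqxx.
Qed.

Lemma coefE n :
  coef n = (-1) ^+ n * (E n.+1 - \sum_(j < n) (-1) ^+ j * coef j * E (n - j)).
Proof.
rewrite {1}/coef /= nth_rcons size_coef_prefix ltnn eqxx /next_coef.
by congr (_ * (_ - _)); apply: eq_bigr => j _; rewrite nth_coef_prefix.
Qed.

Lemma det_toepHess_coef n : \det (toepHess coef n) = E n.
Proof.
have [N] := ubnP n; elim: N n => // N IH [|n] lt_nN; first by rewrite det_mx00 E0.
rewrite det_toepHess_rec big_ord_recr /= subnn det_mx00 mulr1.
rewrite (eq_bigr (fun j : 'I_n => (-1) ^+ j * coef j * E (n - j))); last first.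
  by move=> j _; rewrite IH //; lia.
by rewrite coefE mulrA -expr2 sqrr_sign mul1r addrC subrK.
Qed.

End PrescribedLeadingMinors.

Lemma posp_natB (n k : nat) : posp (n%:Z - k%:Z - 1) = (n - k - 1)%N.
Proof.
rewrite /posp; case: (leqP k.+1 n) => [le_kn|lt_nk].
  by rewrite max_l (_ : n%:Z - k%:Z - 1 = (n - k - 1)%N%:Z) //; lia.
by rewrite max_r /=; lia.
Qed.

Lemma expr_subn_mul_le (R : numDomainType) (t : R) k L x y :
  0 <= t -> t <= 1 -> (x < y < L)%N ->
  t ^+ (L - k - 1) * t ^+ (y - x - 1 - k - 1) <=
  t ^+ (y - k - 1) * t ^+ (L - 1 - x - k - 1).
Proof. by move=> t_ge0 t_le1 /andP [lt_xy lt_yL]; rewrite -!exprD ler_wiXn2l //; lia. Qed.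

Theorem proposition2 (R : realType) (k : nat) (t : R) :
  0 < t < 1 ->
  (exists a : nat -> R, leading_minors_prop k t a) /\
  (forall a : nat -> R, leading_minors_prop k t a ->
     forall n : nat, GKK (toepHess a n)).
Proof.
move=> /andP [t_gt0 t_lt1].
have dets_pow (a : nat -> R) : leading_minors_prop k t a ->
    forall n, \det (toepHess a n) = t ^+ (n - k - 1).
  by move=> det_a [|n]; rewrite ?det_mx00 // det_a // posp_natB.
split.
  exists (coef (fun n => t ^+ (n - k - 1))) => n _.
  by rewrite det_toepHess_coef // posp_natB.
move=> a /dets_pow det_a n; apply: GKK_toepHess => [m|L x y lt_xyL].
  by rewrite det_a exprn_gt0.
by rewrite !det_a expr_subn_mul_le // ltW.
Qed.
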